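(* Let $(\Omega,\mathcal{F},\mathbb{P})$ be a probability space, $(E,\mathcal{E})$ a measurable space, $V\colon E\to[0,\infty]$ measurable, $Z\colon\mathbb{N}_0\times\Omega\to E$ a stochastic process, and let $\gamma_n\in[0,\infty)$, $\delta_n\in(0,\infty]$, $\Omega_n\in\mathcal{F}$, $n\in\mathbb{N}_0$, satisfy $\Omega_0=\Omega$, $\Omega_n\setminus\Omega_{n+1}\subseteq\{V(Z_n)>\delta_n\}$ and $\mathbb{E}[\mathbb{1}_{\Omega_{n+1}}V(Z_{n+1})]\le\gamma_n\,\mathbb{E}[\mathbb{1}_{\Omega_n}V(Z_n)]$ for all $n\in\mathbb{N}_0$. Then for all $n\in\mathbb{N}_0$, $p\in[1,\infty]$ and all measurable $\bar V\colon E\to[0,\infty]$ with $\bar V\le V$: $$\mathbb{E}[\mathbb{1}_{\Omega_n}V(Z_n)]\le\Big(\prod_{k=0}^{n-1}\gamma_k\Big)\mathbb{E}[V(Z_0)],\qquad \mathbb{P}[(\Omega_n)^c]\le\Big(\sum_{k=0}^{n-1}\frac{\prod_{l=0}^{k-1}\gamma_l}{\delta_k}\Big)\mathbb{E}[V(Z_0)],$$ $$\mathbb{E}[\bar V(Z_n)]\le\Big(\prod_{k=0}^{n-1}\gamma_k\Big)\mathbb{E}[V(Z_0)]+\|\bar V(Z_n)\|_{L^p(\Omega;\mathbb{R})}\Big[\Big(\sum_{k=0}^{n-1}\frac{\prod_{l=0}^{k-1}\gamma_l}{\delta_k}\Big)\mathbb{E}[V(Z_0)]\Big]^{(1-1/p)}.$$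 *)

From HB Require Import structures.
From mathcomp Require Import all_boot all_order all_algebra.
From mathcomp Require Import all_classical all_reals all_analysis.
From mathcomp Require Import measurable_realfun lebesgue_measure.
Set Implicit Arguments. Unset Strict Implicit. Unset Printing Implicit Defensive.

(* Iterating the one-step contraction gives E[1_{Om n} V(Z n)] <= (prod_{k<n} gamma k) E[V(Z 0)].
   As Om k minus Om (k+1) lies in {V(Z k) > delta k}, Markov's inequality bounds its
   probability by E[1_{Om k} V(Z k)] / delta k, and a union bound over k < n controls
   P(~ Om n).  Finally E[Vb(Z n)] splits over Om n, where Vb <= V, and over ~ Om n, where
   Hoelder's inequality against the indicator yields ||Vb(Z n)||_p P(~ Om n)^(1 - 1/p). *)

From HB Require Import structures.
From mathcomp Require Import all_boot all_order all_algebra.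
From mathcomp Require Import all_classical all_reals all_analysis.
From mathcomp Require Import measurable_realfun lebesgue_measure.
Set Implicit Arguments.
Unset Strict Implicit.
Unset Printing Implicit Defensive.

Import Order.TTheory GRing.Theory Num.Theory.
Import numFieldNormedType.Exports.
Local Open Scope classical_set_scope.
Local Open Scope ring_scope.
Local Open Scope ereal_scope.

Lemma lee_prod_step (R : realDomainType) (u : nat -> \bar R) (g : nat -> R) :
  (forall n, (0 <= g n)%R) -> (forall n, u n.+1 <= (g n)%:E * u n) ->
  forall n, u n <= (\prod_(k < n) g k)%:E * u 0%N.
Proof.
move=> g0 step; elim=> [|n IH]; first by rewrite big_ord0 mul1e.
apply: le_trans (step n) _.
rewrite big_ord_recr /= EFinM (muleC _ (g n)%:E) -muleA.
by rewrite lee_wpmul2l ?lee_fin.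
Qed.

Lemma fine_subr1_inve_ge0 (R : realFieldType) (p : \bar R) : 1 <= p ->
  (0 <= fine (1 - p^-1))%R.
Proof.
case: p => [r| |] //; last by rewrite invey sube0.
rewrite lee_fin => r1; have r0 : (0 < r)%R := lt_le_trans ltr01 r1.
by rewrite inver gt_eqF//= subr_ge0 invf_le1.
Qed.

Section measure_bounds.
Context d (T : measurableType d) (R : realType).
Variable mu : {measure set T -> \bar R}.

Lemma measure_le_integral_div (f : T -> \bar R) (A D : set T) (a : \bar R) :
  measurable A -> measurable D -> D `<=` A ->
  measurable_fun A f -> (forall x, A x -> 0 <= f x) ->
  0 < a -> D `<=` [set x | a < f x] ->
  mu D <= a^-1 * \int[mu]_(x in A) f x.
Proof.
move=> mA mD DA mf f0 a0 Df.
case: a a0 Df => [r| |] // r0 Df; last first.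
  have -> : D = set0 by apply/seteqP; split => // x /Df /=; rewrite ltNge leey.
  by rewrite measure0 invey mul0e.
rewrite lte_fin in r0; rewrite inver gt_eqF// lee_pdivlMl// -integral_cst//.
apply: le_trans (ge0_subset_integral mu mD mA mf f0 DA).
apply: ge0_le_integral => //; first by move=> x _; rewrite lee_fin ltW.
  exact: measurable_funS mf.
by move=> x /Df /ltW.
Qed.

Lemma measure_setC_le_sum_setD (Om : nat -> set T) :
  (forall n, measurable (Om n)) -> Om 0%N = setT ->
  forall n, mu (~` Om n) <= \sum_(k < n) mu (Om k `\` Om k.+1).
Proof.
move=> mOm Om0; elim=> [|n IH]; first by rewrite big_ord0 Om0 setCT measure0.
have mCn := measurableC (mOm n).
have mDn := measurableD (mOm n) (mOm n.+1).
have sub : ~` Om n.+1 `<=` ~` Om n `|` (Om n `\` Om n.+1).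
  by move=> x /= Cx; have [|] := pselect (Om n x); [right|left].
apply: le_trans (le_measure _ _ _ sub) _; rewrite ?inE//.
- exact: measurableC.
- exact: measurableU.
rewrite big_ord_recr /=; apply: le_trans (measureU2 _ mCn mDn) _.
by rewrite leeD2r.
Qed.

Lemma Lnorm_indic (A : set T) (r : R) : measurable A -> (0 < r)%R ->
  Lnorm mu r%:E (EFin \o \1_A) = mu A `^ r^-1.
Proof.
move=> mA r0; rewrite unlock; congr (_ `^ _).
rewrite -[in RHS](setIT A) -integral_indic//; apply: eq_integral => x _.
by rewrite /= indicE; case: (x \in A); rewrite /= ?normr1 ?powR1 ?normr0 ?powR0 ?gt_eqF.
Qed.

Lemma Lnorm_fine_le (f : T -> \bar R) (r : R) : (0 < r)%R ->
  measurable_fun setT f -> Lnorm mu r%:E (EFin \o fine \o f) <= Lnorm mu r%:E f.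
Proof.
move=> r0 mf; have nonneg (h : T -> \bar R) : \int[mu]_x `|h x| `^ r \in `[0, +oo].
  by rewrite in_itv /= leey andbT integral_ge0// => x _; exact: poweR_ge0.
rewrite !unlock; apply: gt0_ler_poweR => //; first by rewrite invr_ge0 ltW.
apply: ge0_le_integral => //.
- by move=> x _; exact: poweR_ge0.
- apply: measurableT_comp (measurable_poweR r) _; apply: measurableT_comp => //.
  exact/measurable_EFinP/measurableT_comp.
- exact/(measurableT_comp (measurable_poweR r))/measurableT_comp.
by move=> x _ /=; case: (f x) => [t| |] //=; rewrite ?poweRyr ?gt_eqF ?leey.
Qed.

Lemma Lnorm_lty_ae_fin_num (f : T -> \bar R) (r : R) : (0 < r)%R ->
  measurable_fun setT f -> Lnorm mu r%:E f < +oo ->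
  {ae mu, forall x, f x \is a fin_num}.
Proof.
move=> r0 mf Nf.
have mfr : measurable_fun setT (fun x => `|f x| `^ r).
  exact/(measurableT_comp (measurable_poweR r))/measurableT_comp.
have intfr : mu.-integrable setT (fun x => `|f x| `^ r).
  apply/integrableP; split => //; under eq_integral do rewrite gee0_abs ?poweR_ge0//.
  by rewrite -poweR_Lnorm ?gt_eqF// poweR_lty.
apply: filterS (integrable_ae measurableT intfr) => x /(_ I).
by case: (f x) => [t| |] //=; rewrite ?poweRyr ?gt_eqF.
Qed.

Section integral_le_Lnorm.
Variables (A : set T) (f : T -> \bar R).
Hypotheses (mA : measurable A) (mf : measurable_fun setT f) (f0 : forall x, 0 <= f x).

Let mfA : measurable_fun A f := measurable_funS measurableT (@subsetT _ A) mf.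

Lemma integral_le_Lnorm1 : \int[mu]_(x in A) f x <= Lnorm mu 1 f.
Proof.
rewrite Lnorm1; under [leRHS]eq_integral do rewrite gee0_abs//.
exact: ge0_subset_integral.
Qed.

Lemma integral_le_Lnormy : \int[mu]_(x in A) f x <= Lnorm mu +oo f * mu A.
Proof.
have [muA0|muA0] := eqVneq (mu A) 0.
  by rewrite null_set_integral// muA0 mule0.
have muT : 0 < mu setT.
  apply: lt_le_trans (le_measure _ _ _ (@subsetT _ A)); rewrite ?inE//.
  by rewrite lt0e muA0 measure_ge0.
rewrite unlock muT -integral_cst//; apply: ae_ge0_le_integral => //.
- by move=> x _; apply: ess_sup_inf.ess_sup_gee => //; apply/nearW => y /=.
- apply: filterS (ess_sup_inf.ess_sup_ge mu (abse \o f)) => x /= fx _.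
  by rewrite -(gee0_abs (f0 x)).
Qed.

Lemma integral_le_Lnorm_powR (r : R) : (1 < r)%R ->
  \int[mu]_(x in A) f x <= Lnorm mu r%:E f * mu A `^ (1 - r^-1).
Proof.
move=> r1; have r0 : (0 < r)%R := lt_trans ltr01 r1.
have [muA0|muA0] := eqVneq (mu A) 0.
  by rewrite null_set_integral// mule_ge0 ?Lnorm_ge0 ?poweR_ge0.
have [->|Nf] := eqVneq (Lnorm mu r%:E f) +oo.
  by rewrite gt0_mulye ?leey// poweR_gt0// lt0e muA0 measure_ge0.
(* f is a.e. finite since its L^r norm is, so the real Hoelder inequality applies to fine \o f. *)
pose g x := fine (f x).
have mg : measurable_fun setT g := measurableT_comp (fine_measurable measurableT) mf.
have -> : \int[mu]_(x in A) f x = \int[mu]_(x in A) (g x)%:E.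
  apply: ae_eq_integral => //; first exact/measurable_EFinP/(measurable_funS _ _ mg).
  have := Lnorm_lty_ae_fin_num r0 mf; rewrite ltey => /(_ Nf).
  by apply: filterS => x fx _; rewrite /g fineK.
have -> : \int[mu]_(x in A) (g x)%:E = Lnorm mu 1 (EFin \o (g \* \1_A)%R).
  rewrite Lnorm1 integral_mkcond; apply: eq_integral => x _.
  rewrite /patch /= indicE; case: (x \in A); last by rewrite mulr0 normr0.
  by rewrite mulr1 ger0_norm// fine_ge0.
pose q := ((1 - r^-1)^-1)%R.
have q0 : (0 < q)%R by rewrite invr_gt0 subr_gt0 invf_lt1.
have pq : (r^-1 + q^-1 = 1)%R by rewrite invrK addrC subrK.
have m1A : measurable_fun setT (\1_A : T -> R) := measurable_indic mA.
apply: le_trans (@hoelder _ _ _ mu g \1_A r q mg m1A r0 q0 pq) _.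
rewrite Lnorm_indic// invrK lee_wpmul2r ?poweR_ge0//; exact: Lnorm_fine_le.
Qed.

(* p = 1 and p = +oo are treated apart: [hoelder] needs a finite positive conjugate exponent. *)
Lemma integral_le_Lnorm (p : \bar R) : 1 <= p ->
  \int[mu]_(x in A) f x <= Lnorm mu p f * mu A `^ fine (1 - p^-1).
Proof.
case: p => [r| |] //; rewrite ?lee_fin => r1; last first.
  by rewrite invey sube0 /= poweRe1 ?measure_ge0// integral_le_Lnormy.
have [<-|r1'] := eqVneq 1%R r.
  by rewrite inver oner_eq0 invr1 /= subrr poweRe0 mule1 integral_le_Lnorm1.
have r0 : r != 0%R by rewrite gt_eqF// (lt_le_trans ltr01).
rewrite inver (negbTE r0) /=; apply: integral_le_Lnorm_powR.
by rewrite lt_neqAle r1' r1.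
Qed.

End integral_le_Lnorm.

Lemma integral_le_setC_Lnorm (A : set T) (f : T -> \bar R) (p : \bar R) :
  measurable A -> measurable_fun setT f -> (forall x, 0 <= f x) -> 1 <= p ->
  \int[mu]_x f x <=
    \int[mu]_(x in A) f x + Lnorm mu p f * mu (~` A) `^ fine (1 - p^-1).
Proof.
move=> mA mf f0 p1; have mCA := measurableC mA.
rewrite -(setUv A) ge0_integral_setU//; last 2 first.
- by rewrite setUv.
- by rewrite disj_set2E setICr.
by rewrite leeD2l//; apply: integral_le_Lnorm.
Qed.

Lemma measure_setC_le_sum_inve (F : nat -> T -> \bar R) (delta b : nat -> \bar R)
    (Om : nat -> set T) :
  (forall k, measurable_fun setT (F k)) -> (forall k x, 0 <= F k x) ->
  (forall k, 0 < delta k) -> (forall k, measurable (Om k)) -> Om 0%N = setT ->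
  (forall k, Om k `\` Om k.+1 `<=` [set x | delta k < F k x]) ->
  (forall k, \int[mu]_(x in Om k) F k x <= b k) ->
  forall n, mu (~` Om n) <= \sum_(k < n) (delta k)^-1 * b k.
Proof.
move=> mF F0 delta0 mOm Om0 OmF Fb n.
apply: le_trans (measure_setC_le_sum_setD mOm Om0 n) _; apply: lee_sum => k _.
apply: le_trans (measure_le_integral_div (mOm k) (measurableD (mOm k) (mOm k.+1))
  (@subDsetl _ _ _) (measurable_funS _ _ (mF k)) _ (delta0 k) (OmF k)) _ => //.
by rewrite lee_wpmul2l// inve_ge0 ltW.
Qed.

End measure_bounds.

Theorem proposition2p1
  (d : measure_display) (Omega : measurableType d) (R : realType)
  (P : probability Omega R)
  (dE : measure_display) (E : measurableType dE)
  (V : E -> \bar R) (hV0 : forall x, 0 <= V x) (hVm : measurable_fun setT V)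
  (Z : nat -> Omega -> E) (hZ : forall n, measurable_fun setT (Z n))
  (gamma : nat -> R) (delta : nat -> \bar R) (Om : nat -> set Omega)
  (hgamma : forall n, (0 <= gamma n)%R)
  (hdelta : forall n, 0 < delta n)
  (hOm : forall n, measurable (Om n))
  (hOm0 : Om 0%N = setT)
  (hdiff : forall n, Om n `\` Om n.+1 `<=` [set w | delta n < V (Z n w)])
  (hstep : forall n,
     \int[P]_(w in Om n.+1) V (Z n.+1 w)
       <= (gamma n)%:E * \int[P]_(w in Om n) V (Z n w)) :
  forall (n : nat) (p : \bar R), 1 <= p ->
  forall (Vb : E -> \bar R), (forall x, 0 <= Vb x) -> measurable_fun setT Vb ->
  (forall x, Vb x <= V x) ->
  let S := \sum_(k < n) ((\prod_(l < k) gamma l)%R%:E * (delta k)^-1) in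
  [/\ \int[P]_(w in Om n) V (Z n w)
        <= (\prod_(k < n) gamma k)%R%:E * \int[P]_w V (Z 0%N w),
      P (~` Om n) <= S * \int[P]_w V (Z 0%N w)
    & \int[P]_w Vb (Z n w)
        <= (\prod_(k < n) gamma k)%R%:E * \int[P]_w V (Z 0%N w)
           + Lnorm P p (fun w => Vb (Z n w))
             * poweR (S * \int[P]_w V (Z 0%N w)) (fine (1 - p^-1))].
Proof.
move=> n p p1 Vb hVb0 hVbm hVbV S; set E0 := \int[P]_w V (Z 0%N w).
have E00 : 0 <= E0 by apply: integral_ge0 => w _.
have mVZ k : measurable_fun setT (V \o Z k) := measurableT_comp hVm (hZ k).
have decay k : \int[P]_(w in Om k) V (Z k w) <= (\prod_(l < k) gamma l)%:E * E0.
  by have := lee_prod_step hgamma hstep k; rewrite hOm0.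
have coef_ge0 k : 0 <= (\prod_(l < k) gamma l)%:E * (delta k)^-1.
  by rewrite mule_ge0 ?lee_fin ?prodr_ge0// inve_ge0 ltW.
have escape : P (~` Om n) <= S * E0.
  apply: le_trans (measure_setC_le_sum_inve mVZ (fun k w => hV0 _) hdelta hOm hOm0
    hdiff decay n) _.
  rewrite /S ge0_sume_distrl//; apply: lee_sum => k _.
  by rewrite muleA (muleC (delta k)^-1).
split=> //; have mVbZ := measurableT_comp hVbm (hZ n).
apply: le_trans (integral_le_setC_Lnorm P (hOm n) mVbZ (fun w => hVb0 _) p1) _.
apply: leeD.
- apply: le_trans (decay n); apply: ge0_le_integral => //.
  + by move=> w _; exact: hVb0.
  + exact: measurable_funS mVbZ.
  + exact: measurable_funS (mVZ n).
  + by move=> w _; exact: hVbV.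
- apply: lee_wpmul2l; first exact: Lnorm_ge0.
  apply: gt0_ler_poweR => //.
  + exact: fine_subr1_inve_ge0.
  + by rewrite in_itv /= leey measure_ge0.
  + by rewrite in_itv /= leey andbT mule_ge0// sume_ge0.
Qed.
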